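(* Let $\mu$ be a pure-state ensemble on $\mathbb{C}^d$ and let $D(I)$ be its information-disturbance frontier. Let $I$ be an achievable information value lying on the upward-sloping portion of the frontier, i.e. $D(I')>D(I)$ for every achievable $I'>I$. If there is a measurement procedure achieving information gain $I$ and disturbance $D(I)$, then there is a measurement procedure with one-term conditional dynamics achieving information gain $I$ and disturbance $D(I)$.
   Context: A measurement procedure on $\mathbb{C}^d$ consists of a finite POVM $\{F_b\}$ (positive semidefinite, $\sum_b F_b=I$) together with operators $A_{bi}$ (finitely many for each $b$) with $\sum_i A_{bi}^\dagger A_{bi}=F_b$. It has one-term conditional dynamics if for each $b$ there is a single operator $A_b$ (so $A_b^\dagger A_b=F_b$). With $p(b|\psi)=\langle\psi|F_b|\psi\rangle$, $p(b)=\int d\mu(\psi)p(b|\psi)$, the information gain is $-\sum_b p(b)\log p(b)+\int d\mu(\psi)\sum_b p(b|\psi)\log p(b|\psi)$, and the disturbance is $1-\int d\mu(\psi)\sum_{b,i}|\langle\psi|A_{bi}|\psi\rangle|^2$. $D(I)$ is the infimum of the disturbance over all measurement procedures with information gain exactly $I$. *)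

From HB Require Import structures.
From mathcomp Require Import all_boot all_order all_algebra.
From mathcomp Require Import complex.
From mathcomp Require Import all_classical all_reals all_analysis.

Set Implicit Arguments.
Unset Strict Implicit.
Unset Printing Implicit Defensive.

Import Order.TTheory GRing.Theory Num.Theory.
Local Open Scope ring_scope.
Local Open Scope classical_set_scope.

Section QM.
Variable R : realType.
Local Notation C := R[i].

Definition adjmx (m n : nat) (A : 'M[C]_(m, n)) : 'M[C]_(n, m) :=
  (map_mx (@conjc R) A)^T.

Definition abs2 (z : C) : R := complex.Re z ^+ 2 + complex.Im z ^+ 2.

Definition braket (d : nat) (psi : 'cV[C]_d) (X : 'M[C]_d) : C :=
  (adjmx psi *m X *m psi) ord0 ord0.

Definition unit_vec (d : nat) (psi : 'cV[C]_d) : Prop :=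
  \sum_(j < d) abs2 (psi j ord0) = 1.

Definition psd (d : nat) (X : 'M[C]_d) : Prop :=
  adjmx X = X /\ forall v : 'cV[C]_d, complex.Im (braket v X) = 0 /\ 0 <= complex.Re (braket v X).

Definition is_procedure (d m : nat) (k : 'I_m -> nat)
  (F : 'I_m -> 'M[C]_d) (A : forall b : 'I_m, 'I_(k b) -> 'M[C]_d) : Prop :=
  (forall b, psd (F b)) /\
  \sum_(b < m) F b = 1%:M /\
  (forall b, \sum_(i < k b) adjmx (A b i) *m A b i = F b).

Definition is_one_term_procedure (d m : nat)
  (F : 'I_m -> 'M[C]_d) (A : 'I_m -> 'M[C]_d) : Prop :=
  is_procedure (k := fun _ => 1%N) F (fun b (_ : 'I_1) => A b).

Section Ensemble.
(* A pure-state ensemble: a probability space (T, P) together with a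
   measurable map psi from T to unit vectors of C^d; mu is the law of psi. *)
Context {dT : measure_display} {T : measurableType dT}.
Variable P : probability T R.
Variable d : nat.
Variable psi : T -> 'cV[C]_d.

Definition pure_ensemble : Prop :=
  (forall t, unit_vec (psi t)) /\
  (forall j : 'I_d, measurable_fun setT (fun t => complex.Re (psi t j ord0)) /\
                    measurable_fun setT (fun t => complex.Im (psi t j ord0))).

Definition pcond (X : 'M[C]_d) (t : T) : R := complex.Re (braket (psi t) X).

Definition pmarg (X : 'M[C]_d) : R := Rintegral P setT (pcond X).

Definition info_gain (m : nat) (F : 'I_m -> 'M[C]_d) : R :=
  - (\sum_(b < m) pmarg (F b) * ln (pmarg (F b)))
  + Rintegral P setT
      (fun t => \sum_(b < m) pcond (F b) t * ln (pcond (F b) t)).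

Definition disturbance (m : nat) (k : 'I_m -> nat)
  (A : forall b : 'I_m, 'I_(k b) -> 'M[C]_d) : R :=
  1 - Rintegral P setT
        (fun t => \sum_(b < m) \sum_(i < k b) abs2 (braket (psi t) (A b i))).

Definition achieves (I x : R) : Prop :=
  exists (m : nat) (k : 'I_m -> nat) (F : 'I_m -> 'M[C]_d)
         (A : forall b : 'I_m, 'I_(k b) -> 'M[C]_d),
    is_procedure F A /\ info_gain F = I /\ disturbance A = x.

Definition achievable (I : R) : Prop := exists x, achieves I x.

Definition frontier (I : R) : R := inf [set x | achieves I x].

End Ensemble.
End QM.

From HB Require Import structures.
From mathcomp Require Import all_boot all_order all_algebra.
From mathcomp Require Import complex.
From mathcomp Require Import all_classical all_reals all_analysis.
From mathcomp Require Import ring lra.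
Import Order.TTheory GRing.Theory Num.Theory.
Local Open Scope ring_scope.
Set Implicit Arguments.
Unset Strict Implicit.
Unset Printing Implicit Defensive.

(* Split every outcome [b] of an optimal procedure into one outcome per Kraus
   operator [A b i], with POVM element [(A b i)^dag (A b i)].  The result has
   one-term dynamics and the same disturbance, and its information gain is at
   least [I], because coarse-graining outcomes can only lose information (the
   log-sum inequality, applied pointwise and integrated).  A strictly larger
   gain [I'] is impossible: the refined procedure would give
   [D(I') <= D(I)], contradicting [D(I) < D(I')]. *)

Section Complex.
Variable R : realType.
Local Notation C := R[i].

Lemma conjc_mul_abs2 (z : C) : (z^* * z)%C = (abs2 z)%:C%C.
Proof.
case: z => a b; rewrite /abs2 /=.
rewrite -[(_ +i* _)%C * (_ +i* _)%C]/(_ +i* _)%C.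
by congr (_ +i* _)%C; ring.
Qed.

Lemma abs2_ge0 (z : C) : 0 <= abs2 z.
Proof. by rewrite addr_ge0 // sqr_ge0. Qed.

Lemma adjmxE (m n : nat) (A : 'M[C]_(m, n)) i j : adjmx A i j = ((A j i)^*)%C.
Proof. by rewrite !mxE. Qed.

Lemma adjmxM (m n p : nat) (A : 'M[C]_(m, n)) (B : 'M[C]_(n, p)) :
  adjmx (A *m B) = adjmx B *m adjmx A.
Proof. by rewrite /adjmx map_mxM trmx_mul. Qed.

Lemma adjmxK (m n : nat) (A : 'M[C]_(m, n)) : adjmx (adjmx A) = A.
Proof. by apply/matrixP => i j; rewrite !mxE conjcK. Qed.

Definition dotv (d : nat) (u v : 'cV[C]_d) : C := (adjmx u *m v) ord0 ord0.

Lemma dotvE (d : nat) (u v : 'cV[C]_d) :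
  dotv u v = \sum_j ((u j ord0)^* * v j ord0)%C.
Proof. by rewrite /dotv mxE; apply: eq_bigr => j _; rewrite adjmxE. Qed.

Lemma dotvv (d : nat) (u : 'cV[C]_d) :
  dotv u u = (\sum_j abs2 (u j ord0))%:C%C.
Proof. by rewrite dotvE rmorph_sum; apply: eq_bigr => j _; exact: conjc_mul_abs2. Qed.

Lemma conjc_dotv (d : nat) (u v : 'cV[C]_d) : ((dotv u v)^*)%C = dotv v u.
Proof.
rewrite !dotvE rmorph_sum; apply: eq_bigr => j _.
by rewrite rmorphM /= conjcK mulrC.
Qed.

Lemma braket_dotv (d : nat) (psi : 'cV[C]_d) (X : 'M[C]_d) :
  braket psi X = dotv psi (X *m psi).
Proof. by rewrite /braket /dotv mulmxA. Qed.

Lemma braket_sum (d : nat) (psi : 'cV[C]_d) (I : Type) (r : seq I) (X : I -> 'M[C]_d) :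
  braket psi (\sum_(i <- r) X i) = \sum_(i <- r) braket psi (X i).
Proof. by rewrite /braket mulmx_sumr mulmx_suml summxE. Qed.

Lemma braket_adjmxM (d : nat) (psi : 'cV[C]_d) (B : 'M[C]_d) :
  braket psi (adjmx B *m B) = dotv (B *m psi) (B *m psi).
Proof. by rewrite /braket /dotv adjmxM !mulmxA. Qed.

Lemma Re_braket_adjmxM_ge0 (d : nat) (psi : 'cV[C]_d) (B : 'M[C]_d) :
  0 <= complex.Re (braket psi (adjmx B *m B)).
Proof. by rewrite braket_adjmxM dotvv /= sumr_ge0 // => j _; exact: abs2_ge0. Qed.

Lemma psd_adjmxM (d : nat) (B : 'M[C]_d) : psd (adjmx B *m B).
Proof.
split; first by rewrite adjmxM adjmxK.
by move=> v; split; [rewrite braket_adjmxM dotvv | exact: Re_braket_adjmxM_ge0].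
Qed.

Lemma dotv_subZ (d : nat) (a b : 'cV[C]_d) (c : C) :
  dotv (a - c *: b) (a - c *: b) =
  dotv a a - c * dotv a b - (c^*)%C * dotv b a + (c^*)%C * c * dotv b b.
Proof.
rewrite !dotvE !mulr_sumr -!sumrB -big_split /=; apply: eq_bigr => j _.
by rewrite !mxE rmorphB rmorphM /=; ring.
Qed.

(* Cauchy-Schwarz, from [0 <= |B psi - c psi|^2] with [c = <psi|B|psi>]. *)
Lemma abs2_braket_le (d : nat) (psi : 'cV[C]_d) (B : 'M[C]_d) :
  unit_vec psi ->
  abs2 (braket psi B) <= complex.Re (braket psi (adjmx B *m B)).
Proof.
move=> unit_psi; set y := B *m psi; set c := braket psi B.
have psi_psi : dotv psi psi = 1 by rewrite dotvv unit_psi.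
have psi_y : dotv psi y = c by rewrite /c braket_dotv.
have y_psi : dotv y psi = (c^*)%C by rewrite -psi_y conjc_dotv.
have residual : dotv (y - c *: psi) (y - c *: psi) = dotv y y - (c^*)%C * c.
  by rewrite dotv_subZ psi_psi psi_y y_psi; ring.
rewrite braket_adjmxM -/y -subr_ge0 -[abs2 c]/(complex.Re (abs2 c)%:C%C).
rewrite -conjc_mul_abs2 -raddfB -residual dotvv /= sumr_ge0 // => j _.
exact: abs2_ge0.
Qed.

End Complex.

Section ComplexMeasurable.
Context (R : realType) (dT : measure_display) (T : measurableType dT).
Local Notation C := R[i].

Definition cmeasurable (f : T -> C) : Prop :=
  measurable_fun setT (fun t => complex.Re (f t)) /\
  measurable_fun setT (fun t => complex.Im (f t)).

Lemma cmeasurable_cst (c : C) : cmeasurable (fun _ => c).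
Proof. by split; exact: measurable_cst. Qed.

Lemma cmeasurableD (f g : T -> C) :
  cmeasurable f -> cmeasurable g -> cmeasurable (fun t => f t + g t).
Proof.
move=> [f1 f2] [g1 g2].
by split; under eq_fun do rewrite raddfD; exact: measurable_realfun.measurable_funD.
Qed.

Lemma cmeasurableM (f g : T -> C) :
  cmeasurable f -> cmeasurable g -> cmeasurable (fun t => f t * g t).
Proof.
move=> [f1 f2] [g1 g2].
have ReM (x y : C) : complex.Re (x * y) =
    complex.Re x * complex.Re y - complex.Im x * complex.Im y by case: x; case: y.
have ImM (x y : C) : complex.Im (x * y) =
    complex.Re x * complex.Im y + complex.Im x * complex.Re y by case: x; case: y.
split; [under eq_fun do rewrite ReM; apply: measurable_realfun.measurable_funB
       |under eq_fun do rewrite ImM; apply: measurable_realfun.measurable_funD];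
  exact: measurable_realfun.measurable_funM.
Qed.

Lemma cmeasurable_conjc (f : T -> C) :
  cmeasurable f -> cmeasurable (fun t => ((f t)^*)%C).
Proof.
move=> [f1 f2].
have ReJ (x : C) : complex.Re (x^*)%C = complex.Re x by case: x.
have ImJ (x : C) : complex.Im (x^*)%C = - complex.Im x by case: x.
split; first by under eq_fun do rewrite ReJ.
by under eq_fun do rewrite ImJ; exact: measurableT_comp.
Qed.

Lemma cmeasurable_sum (I : Type) (s : seq I) (f : I -> T -> C) :
  (forall i, cmeasurable (f i)) -> cmeasurable (fun t => \sum_(i <- s) f i t).
Proof.
move=> mf; elim: s => [|i s IH].
  by under eq_fun do rewrite big_nil; exact: cmeasurable_cst.
by under eq_fun do rewrite big_cons; exact: cmeasurableD.
Qed.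

Lemma cmeasurable_braket (d : nat) (psi : T -> 'cV[C]_d) (X : 'M[C]_d) :
  (forall j, cmeasurable (fun t => psi t j ord0)) ->
  cmeasurable (fun t => braket (psi t) X).
Proof.
move=> mpsi; under eq_fun do rewrite braket_dotv dotvE.
apply: cmeasurable_sum => j; apply: cmeasurableM; first exact: cmeasurable_conjc.
under eq_fun do rewrite mxE.
by apply: cmeasurable_sum => l; apply: cmeasurableM => //; exact: cmeasurable_cst.
Qed.

Lemma measurable_abs2 (f : T -> C) :
  cmeasurable f -> measurable_fun setT (fun t => abs2 (f t)).
Proof.
move=> [f1 f2].
by apply: measurable_realfun.measurable_funD; exact: measurable_realfun.measurable_funM.
Qed.

End ComplexMeasurable.

Section LogInequalities.
Variable R : realType.

Lemma mul_lnB_le (q Q : R) : 0 <= q -> 0 < Q -> q * (ln Q - ln q) <= Q - q.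
Proof.
move=> q_ge0 Q_gt0; have [->|q_gt0] := eqVneq q 0; first by rewrite mul0r subr0 ltW.
have {q_ge0}q_gt0 : 0 < q by rewrite lt_def q_gt0.
have ratio : ln Q - ln q = ln (1 + (Q / q - 1)).
  by rewrite [1 + _]addrC subrK lnM ?lnV ?posrE ?invr_gt0.
have Qq_gt0 : 0 < Q / q by rewrite divr_gt0.
have ln_le : ln (1 + (Q / q - 1)) <= Q / q - 1 by apply: le_ln1Dx; lra.
rewrite ratio; apply: le_trans (ler_wpM2l (ltW q_gt0) ln_le) _.
by rewrite mulrBr mulr1 mulrCA mulfV ?lt0r_neq0 // mulr1.
Qed.

Lemma normr_xlnx_le1 (x : R) : 0 <= x <= 1 -> `|x * ln x| <= 1.
Proof.
case/andP => x_ge0 x_le1.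
have := mul_lnB_le x_ge0 ltr01; rewrite ln1 sub0r mulrN => lnx_lb.
rewrite ler0_norm ?mulr_ge0_le0 ?ln_le0 //; lra.
Qed.

(* Pairing each [q j] with [Q j * p / S] puts the weights on the same total
   mass [p]; then [mul_lnB_le] is Gibbs' inequality term by term.  The support
   hypothesis stands in for [q ln (q / 0) = +oo], since [ln 0 = 0] here. *)
Lemma log_sum_le (J : finType) (q Q : J -> R) :
  (forall j, 0 <= q j) -> (forall j, 0 <= Q j) -> (forall j, Q j = 0 -> q j = 0) ->
  \sum_j q j * ln (Q j) - (\sum_j q j) * ln (\sum_j Q j) <=
  \sum_j q j * ln (q j) - (\sum_j q j) * ln (\sum_j q j).
Proof.
move=> q_ge0 Q_ge0 supp; set p := \sum_j q j; set S := \sum_j Q j.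
have [p0|p_neq0] := eqVneq p 0.
  have q0 j : q j = 0 by apply: (psumr_eq0P (fun j _ => q_ge0 j) p0).
  by rewrite p0 !mul0r !big1 // => j _; rewrite q0 mul0r.
have p_gt0 : 0 < p by rewrite lt_def p_neq0 sumr_ge0.
have S_gt0 : 0 < S.
  rewrite lt_def sumr_ge0 // andbT; apply: contra_neq p_neq0 => S0.
  by rewrite /p big1 // => j _; apply/supp/(psumr_eq0P (fun j _ => Q_ge0 j) S0).
have term j : q j * (ln (Q j) + ln p - ln S - ln (q j)) <= Q j * p / S - q j.
  have [Q0|Qj_neq0] := eqVneq (Q j) 0.
    by rewrite (supp j Q0) Q0 !mul0r subr0.
  have Qj_gt0 : 0 < Q j by rewrite lt_def Qj_neq0 Q_ge0.
  rewrite -lnV ?posrE // -!lnM ?posrE ?mulr_gt0 ?invr_gt0 //.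
  exact: mul_lnB_le (q_ge0 j) (divr_gt0 (mulr_gt0 Qj_gt0 p_gt0) S_gt0).
have masses : \sum_j (Q j * p / S - q j) = 0.
  by rewrite sumrB -!mulr_suml -/S -/p mulrAC mulfV ?lt0r_neq0 // mul1r subrr.
have : \sum_j q j * (ln (Q j) + ln p - ln S - ln (q j)) <= 0.
  by rewrite -[leRHS]masses; apply: ler_sum => j _; exact: term.
under eq_bigr do rewrite !mulrDr !mulrN.
rewrite !big_split /= !sumrN -!mulr_suml -/p; lra.
Qed.

End LogInequalities.

Section BoundedIntegration.
Context (R : realType) (dT : measure_display) (T : measurableType dT).
Variable P : probability T R.
Local Notation Rint f := (Rintegral P setT f).

Definition bounded_measurable (f : T -> R) : Prop :=
  measurable_fun setT f /\ exists M, forall t, `|f t| <= M.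

Lemma bounded_measurable_cst (c : R) : bounded_measurable (fun _ => c).
Proof. by split; [exact: measurable_cst | exists `|c|]. Qed.

Lemma bounded_measurableD (f g : T -> R) :
  bounded_measurable f -> bounded_measurable g -> bounded_measurable (fun t => f t + g t).
Proof.
move=> [mf [M fM]] [mg [N gN]]; split; first exact: measurable_realfun.measurable_funD.
by exists (M + N) => t; rewrite (le_trans (ler_normD _ _)) ?lerD.
Qed.

Lemma bounded_measurableB (f g : T -> R) :
  bounded_measurable f -> bounded_measurable g -> bounded_measurable (fun t => f t - g t).
Proof.
move=> [mf [M fM]] [mg [N gN]]; split; first exact: measurable_realfun.measurable_funB.
by exists (M + N) => t; rewrite (le_trans (ler_normB _ _)) ?lerD.
Qed.

Lemma bounded_measurableM (f g : T -> R) :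
  bounded_measurable f -> bounded_measurable g -> bounded_measurable (fun t => f t * g t).
Proof.
move=> [mf [M fM]] [mg [N gN]]; split; first exact: measurable_realfun.measurable_funM.
by exists (M * N) => t; rewrite normrM ler_pM.
Qed.

Lemma bounded_measurableMr (f : T -> R) (c : R) :
  bounded_measurable f -> bounded_measurable (fun t => f t * c).
Proof. by move=> bf; apply: bounded_measurableM => //; exact: bounded_measurable_cst. Qed.

Lemma bounded_measurable_sum (I : Type) (s : seq I) (f : I -> T -> R) :
  (forall i, bounded_measurable (f i)) ->
  bounded_measurable (fun t => \sum_(i <- s) f i t).
Proof.
move=> bf; elim: s => [|i s IH].
  by under eq_fun do rewrite big_nil; exact: bounded_measurable_cst.
by under eq_fun do rewrite big_cons; exact: bounded_measurableD.
Qed.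

Lemma bounded_measurable01 (f : T -> R) :
  measurable_fun setT f -> (forall t, 0 <= f t <= 1) -> bounded_measurable f.
Proof.
move=> mf f01; split => //; exists 1 => t.
by case/andP: (f01 t) => f_ge0 f_le1; rewrite ger0_norm.
Qed.

Lemma bounded_measurable_xlnx (f : T -> R) :
  measurable_fun setT f -> (forall t, 0 <= f t <= 1) ->
  bounded_measurable (fun t => f t * ln (f t)).
Proof.
move=> mf f01; split; last by exists 1 => t; exact: normr_xlnx_le1.
apply: measurable_realfun.measurable_funM => //.
exact: measurableT_comp (@measurable_realfun.measurable_ln R) mf.
Qed.

Lemma bounded_measurable_integrable (f : T -> R) :
  bounded_measurable f -> P.-integrable setT (EFin \o f).
Proof.
move=> [mf [M fM]]; apply: measurable_bounded_integrable => //.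
  by apply: le_lt_trans (probability_le1 P measurableT) _; rewrite ltey.
exists M; split; first exact: num_real.
by move=> N MN t _; exact: le_trans (fM t) (ltW MN).
Qed.

Lemma Rintegral_const (c : R) : Rint (fun _ => c) = c.
Proof.
have P1 : fine (P setT) = 1 by rewrite probability_setT.
by rewrite Rintegral_cst // P1 mulr1.
Qed.

Lemma Rintegral_sum (I : Type) (s : seq I) (f : I -> T -> R) :
  (forall i, bounded_measurable (f i)) ->
  Rint (fun t => \sum_(i <- s) f i t) = \sum_(i <- s) Rint (f i).
Proof.
move=> bf; elim: s => [|i s IH].
  by under eq_Rintegral do rewrite big_nil; rewrite big_nil Rintegral_const.
under eq_Rintegral do rewrite big_cons.
rewrite big_cons RintegralD ?IH //; apply: bounded_measurable_integrable => //.
exact: bounded_measurable_sum.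
Qed.

Lemma Rintegral_sum_mulr (I : Type) (s : seq I) (f : I -> T -> R) (c : I -> R) :
  (forall i, bounded_measurable (f i)) ->
  Rint (fun t => \sum_(i <- s) f i t * c i) = \sum_(i <- s) Rint (f i) * c i.
Proof.
move=> bf; rewrite Rintegral_sum; last by move=> i; exact: bounded_measurableMr.
by apply: eq_bigr => i _; rewrite RintegralZr //; exact: bounded_measurable_integrable.
Qed.

Lemma Rintegral_ae_ge0 (f : T -> R) :
  P.-integrable setT (EFin \o f) -> {ae P, forall t, 0 <= f t} -> 0 <= Rint f.
Proof.
move=> intf [N [mN PN0 f_ge0_off_N]].
rewrite /Rintegral (negligible_integral mN measurableT intf PN0) fine_ge0 //.
apply: integral_ge0 => t [_ Nt]; rewrite lee_fin.
by apply: contrapT => ft; exact/Nt/f_ge0_off_N.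
Qed.

Lemma Rintegral_eq0_ae (f : T -> R) :
  bounded_measurable f -> (forall t, 0 <= f t) -> {ae P, forall t, Rint f = 0 -> f t = 0}.
Proof.
move=> bf f_ge0; have [f_int0|f_intN0] := eqVneq (Rint f) 0; last first.
  by apply: nearW => t /eqP; rewrite (negbTE f_intN0).
have intf := bounded_measurable_integrable bf.
have : ae_eq P setT (EFin \o f) (cst 0%E).
  apply/ae_eq_integral_abs => //; first by apply/measurable_realfun.measurable_EFinP; case: bf.
  rewrite (eq_integral (EFin \o f)) => [|t _]; last by rewrite gee0_abs ?lee_fin.
  by rewrite -(fineK (integrable_fin_num measurableT intf)) -/(Rintegral _ _ _) f_int0.
by apply: filterS => t /(_ I) [].
Qed.

End BoundedIntegration.

Section Information.
Context (R : realType) (dT : measure_display) (T : measurableType dT).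
Variable P : probability T R.
Local Notation Rint f := (Rintegral P setT f).

Definition info (X : finType) (p : X -> T -> R) : R :=
  - (\sum_x Rint (p x) * ln (Rint (p x))) + Rint (fun t => \sum_x p x t * ln (p x t)).

Lemma info_reindex (X Y : finType) (h : X -> Y) (p : Y -> T -> R) :
  bijective h -> info (fun x => p (h x)) = info p.
Proof.
move=> h_bij; rewrite [RHS]/info (reindex h (onW_bij _ h_bij)).
by congr (_ + _); apply: eq_Rintegral => t _; rewrite (reindex h (onW_bij _ h_bij)).
Qed.

Lemma big_tagged (V : nmodType) (I : finType) (J : I -> finType)
    (F : {i : I & J i} -> V) :
  \sum_x F x = \sum_i \sum_(j : J i) F (Tagged J j).
Proof.
rewrite (sig_big_dep xpredT (fun _ => xpredT) (fun i j => F (Tagged J j))).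
by apply: eq_big => // -[].
Qed.

(* The log-sum inequality applies at every [t] with
   [Rint (q i j) = 0 -> q i j t = 0] for all [i, j], i.e. almost everywhere. *)
Lemma info_refine (I : finType) (J : I -> finType) (q : forall i, J i -> T -> R) :
  (forall i j, measurable_fun setT (q i j)) ->
  (forall i j t, 0 <= q i j t) ->
  (forall i t, \sum_j q i j t <= 1) ->
  info (fun i t => \sum_j q i j t) <= info (fun x : {i : I & J i} => q (tag x) (tagged x)).
Proof.
move=> mq q_ge0 p_le1; set p := fun i t => \sum_j q i j t.
have p01 i t : 0 <= p i t <= 1 by rewrite p_le1 sumr_ge0.
have q01 i j t : 0 <= q i j t <= 1.
  by rewrite q_ge0 (le_trans _ (p_le1 i t)) // (bigD1 j) //= lerDl sumr_ge0.
have bq i j : bounded_measurable (q i j) := bounded_measurable01 (mq i j) (q01 i j).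
have bp i : bounded_measurable (p i) by apply: bounded_measurable_sum.
set Q := fun i j => Rint (q i j).
have PE i : Rint (p i) = \sum_j Q i j by rewrite Rintegral_sum.
have bqlnq i j := bounded_measurable_xlnx (mq i j) (q01 i j).
have bplnp i := bounded_measurable_xlnx (bp i).1 (p01 i).
have bA : bounded_measurable (fun t => \sum_i \sum_j q i j t * ln (q i j t)).
  by apply: bounded_measurable_sum => i; exact: bounded_measurable_sum.
have bB : bounded_measurable (fun t => \sum_i p i t * ln (p i t)).
  exact: bounded_measurable_sum.
have bC : bounded_measurable (fun t => \sum_i \sum_j q i j t * ln (Q i j)).
  by do 2 apply: bounded_measurable_sum => ?; exact: bounded_measurableMr.
have bD : bounded_measurable (fun t => \sum_i p i t * ln (Rint (p i))).
  by apply: bounded_measurable_sum => i; exact: bounded_measurableMr.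
have RintC : Rint (fun t => \sum_i \sum_j q i j t * ln (Q i j)) =
             \sum_i \sum_j Q i j * ln (Q i j).
  rewrite Rintegral_sum => [|i]; first by apply: eq_bigr => i _; rewrite Rintegral_sum_mulr.
  by apply: bounded_measurable_sum => j; exact: bounded_measurableMr.
have supp : {ae P, forall t i j, Q i j = 0 -> q i j t = 0}.
  by do 2 apply: filter_forall => ?; exact: Rintegral_eq0_ae.
have excess_ge0 : {ae P, forall t,
    0 <= (\sum_i \sum_j q i j t * ln (q i j t) - \sum_i p i t * ln (p i t)) -
         (\sum_i \sum_j q i j t * ln (Q i j) - \sum_i p i t * ln (Rint (p i)))}.
  apply: filterS supp => t supp_t; rewrite -!sumrB sumr_ge0 // => i _.
  rewrite subr_ge0 PE; apply: log_sum_le => j; [exact: q_ge0 | exact: Rintegral_ge0 |].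
  exact: supp_t.
have := Rintegral_ae_ge0 (bounded_measurable_integrable P
  (bounded_measurableB (bounded_measurableB bA bB) (bounded_measurableB bC bD))) excess_ge0.
rewrite !RintegralB //;
  try exact/bounded_measurable_integrable/bounded_measurableB;
  try exact: bounded_measurable_integrable.
rewrite RintC Rintegral_sum_mulr // /info big_tagged.
under [X in _ -> _ <= _ + X]eq_Rintegral do rewrite big_tagged.
rewrite /=; lra.
Qed.

End Information.

Section Procedure.
Variable R : realType.
Variables (d m : nat) (k : 'I_m -> nat) (F : 'I_m -> 'M[R[i]]_d).
Variable A : forall b : 'I_m, 'I_(k b) -> 'M[R[i]]_d.
Arguments A : clear implicits.
Hypothesis procA : is_procedure F A.

Lemma Re_braket_povm_ge0 (v : 'cV[R[i]]_d) b : 0 <= complex.Re (braket v (F b)).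
Proof. by case: procA => psdF _; case: (psdF b) => _ /(_ v) []. Qed.

Lemma Re_braket_povmE (v : 'cV[R[i]]_d) b :
  complex.Re (braket v (F b)) = \sum_i complex.Re (braket v (adjmx (A b i) *m A b i)).
Proof.
case: procA => _ [_ krausA].
by rewrite -(krausA b) braket_sum raddf_sum.
Qed.

Lemma sum_Re_braket_povm (v : 'cV[R[i]]_d) :
  unit_vec v -> \sum_b complex.Re (braket v (F b)) = 1.
Proof.
case: procA => _ [sumF _] unit_v.
by rewrite -raddf_sum -braket_sum sumF braket_dotv mul1mx dotvv unit_v.
Qed.

Lemma Re_braket_povm_le1 (v : 'cV[R[i]]_d) b :
  unit_vec v -> complex.Re (braket v (F b)) <= 1.
Proof.
move=> unit_v; rewrite -(sum_Re_braket_povm unit_v) (bigD1 b) //= lerDl.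
by apply: sumr_ge0 => b' _; exact: Re_braket_povm_ge0.
Qed.

Lemma sum_abs2_braket_kraus_le1 (v : 'cV[R[i]]_d) :
  unit_vec v -> \sum_b \sum_i abs2 (braket v (A b i)) <= 1.
Proof.
move=> unit_v; rewrite -(sum_Re_braket_povm unit_v); apply: ler_sum => b _.
by rewrite Re_braket_povmE; apply: ler_sum => i _; exact: abs2_braket_le.
Qed.

End Procedure.

Section Ensemble.
Context (R : realType) (dT : measure_display) (T : measurableType dT).
Variable P : probability T R.
Variables (d : nat) (psi : T -> 'cV[R[i]]_d).
Hypothesis pure_psi : pure_ensemble psi.

Lemma measurable_pcond (X : 'M[R[i]]_d) : measurable_fun setT (pcond psi X).
Proof. by case: pure_psi => _ mpsi; case: (cmeasurable_braket X mpsi). Qed.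

Lemma disturbance_ge0 (m : nat) (k : 'I_m -> nat) (F : 'I_m -> 'M[R[i]]_d)
    (A : forall b : 'I_m, 'I_(k b) -> 'M[R[i]]_d) :
  is_procedure F A -> 0 <= disturbance P psi A.
Proof.
case: pure_psi => unit_psi mpsi procA; rewrite subr_ge0 -[leRHS](Rintegral_const P 1).
have mf : measurable_fun setT (fun t => \sum_b \sum_i abs2 (braket (psi t) (A b i))).
  apply: measurable_sum => b; apply: measurable_sum => i.
  by apply/measurable_abs2/cmeasurable_braket => j; exact: mpsi.
have f01 t : 0 <= \sum_b \sum_i abs2 (braket (psi t) (A b i)) <= 1.
  rewrite (sum_abs2_braket_kraus_le1 procA) // andbT.
  by apply: sumr_ge0 => b _; apply: sumr_ge0 => i _; exact: abs2_ge0.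
apply: le_Rintegral => //; try exact/bounded_measurable_integrable/bounded_measurable01.
  exact/bounded_measurable_integrable/bounded_measurable_cst.
by move=> t _; case/andP: (f01 t).
Qed.

Lemma frontier_le (I x : R) : achieves P psi I x -> frontier P psi I <= x.
Proof.
move=> achx; apply: ge_inf achx; exists 0 => _ [m [k [F [A [procA [_ <-]]]]]].
exact: disturbance_ge0 procA.
Qed.

End Ensemble.

Section Refinement.
Variable R : realType.
Variables (d m : nat) (k : 'I_m -> nat) (A : forall b : 'I_m, 'I_(k b) -> 'M[R[i]]_d).
Arguments A : clear implicits.

Definition refined_kraus (i : 'I_#|{: {b : 'I_m & 'I_(k b)}}|) : 'M[R[i]]_d :=
  A (tag (enum_val i)) (tagged (enum_val i)).

Definition refined_povm i := adjmx (refined_kraus i) *m refined_kraus i.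

Lemma big_refined (V : nmodType) (g : forall b : 'I_m, 'I_(k b) -> V) :
  \sum_(i < #|{: {b : 'I_m & 'I_(k b)}}|) g (tag (enum_val i)) (tagged (enum_val i)) =
  \sum_b \sum_j g b j.
Proof. by rewrite -(big_enum_val (fun x => g (tag x) (tagged x))) big_tagged. Qed.

Lemma refined_procedure (F : 'I_m -> 'M[R[i]]_d) :
  is_procedure F A -> is_one_term_procedure refined_povm refined_kraus.
Proof.
case=> _ [sumF krausA]; split; first by move=> i; exact: psd_adjmxM.
split; last by move=> i; rewrite big_ord1.
rewrite (big_refined (fun b j => adjmx (A b j) *m A b j)) -sumF.
by apply: eq_bigr => b _; rewrite krausA.
Qed.

Context (dT : measure_display) (T : measurableType dT).
Variables (P : probability T R) (psi : T -> 'cV[R[i]]_d).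

Lemma disturbance_refined :
  disturbance P psi (k := fun _ => 1%N) (fun i (_ : 'I_1) => refined_kraus i) =
  disturbance P psi A.
Proof.
congr (1 - _); apply: eq_Rintegral => t _.
under eq_bigr do rewrite big_ord1.
exact: (big_refined (fun b j => abs2 (braket (psi t) (A b j)))).
Qed.

Lemma info_gain_refined (F : 'I_m -> 'M[R[i]]_d) :
  pure_ensemble psi -> is_procedure F A ->
  info_gain P psi F <= info_gain P psi refined_povm.
Proof.
move=> pure_psi procA.
pose q b j := pcond psi (adjmx (A b j) *m A b j).
have -> : info_gain P psi F = info P (fun b t => \sum_j q b j t).
  by congr (info P _); apply: funext => b; apply: funext => t; exact: (Re_braket_povmE procA).
have -> : info_gain P psi refined_povm =
          info P (fun x : {b : 'I_m & 'I_(k b)} => q (tag x) (tagged x)).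
  exact: (info_reindex P (fun x => q (tag x) (tagged x)) (enum_val_bij _)).
apply: info_refine => [b j|b j t|b t].
- exact: measurable_pcond.
- exact: Re_braket_adjmxM_ge0.
- rewrite /q /pcond -(Re_braket_povmE procA); apply: (Re_braket_povm_le1 procA).
  by case: pure_psi.
Qed.

End Refinement.

Unset Implicit Arguments.
Set Strict Implicit.

Theorem mainTheorem3 (R : realType) (dT : measure_display) (T : measurableType dT)
  (P : probability T R) (d : nat) (psi : T -> 'cV[R[i]]_d) (I : R) :
  pure_ensemble psi ->
  achievable P psi I ->
  (forall I' : R, achievable P psi I' -> I < I' ->
     frontier P psi I < frontier P psi I') ->
  achieves P psi I (frontier P psi I) ->
  exists (m : nat) (F : 'I_m -> 'M[R[i]]_d) (A : 'I_m -> 'M[R[i]]_d),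
    is_one_term_procedure F A /\
    info_gain P psi F = I /\
    disturbance P psi (k := fun _ => 1%N) (fun b (_ : 'I_1) => A b) = frontier P psi I.
Proof.
move=> pure_psi _ upward [m [k [F [A [procA [infoA distA]]]]]].
have ach_refined :
    achieves P psi (info_gain P psi (refined_povm A)) (frontier P psi I).
  exists _, (fun _ => 1%N), (refined_povm A), (fun i (_ : 'I_1) => refined_kraus A i).
  by rewrite disturbance_refined distA; split => //; exact: refined_procedure procA.
have info_refined : info_gain P psi (refined_povm A) = I.
  apply: le_anti; rewrite -{2}infoA info_gain_refined // andbT leNgt.
  apply/negP => lt_I; have := upward _ (ex_intro _ _ ach_refined) lt_I.
  by rewrite ltNge frontier_le.
exists _, (refined_povm A), (refined_kraus A); split; first exact: refined_procedure procA.
by split => //; rewrite disturbance_refined.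
Qed.
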